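(* Let $C$ be an open cone. A sequence in $C$ is an almost-geodesic for the Hilbert function $H_C$ if and only if it is an almost-geodesic both for the Funk function $F_C$ and for the reverse Funk function $RF_C$.
   Context: $V$ is a finite-dimensional real vector space. An open cone is a nonempty open convex set $C\subset V$ with $\lambda C\subseteq C$ for all $\lambda>0$ and $0\notin C$. Write $x\le_C y$ iff $y-x\in\overline C$; $M_C(y/x):=\inf\{\lambda>0:y\le_C\lambda x\}$; $F_C(y,x):=\log M_C(y/x)$; $RF_C(x,y):=F_C(y,x)$; $H_C(x,y):=F_C(x,y)+F_C(y,x)$ for $x,y\in C$ (these satisfy the triangle inequality). For $d\in\{F_C,RF_C,H_C\}$, an almost-geodesic is a sequence $(x_l)_{l\in\mathbb N}$ in $C$ such that for some $\epsilon>0$, $\sum_{i=1}^l d(x_{i-1},x_i)\le d(x_0,x_l)+\epsilon$ for all $l\ge1$. *)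

From HB Require Import structures.
From mathcomp Require Import all_boot all_order all_algebra.
From mathcomp Require Import all_classical all_reals all_analysis.
Set Implicit Arguments. Unset Strict Implicit. Unset Printing Implicit Defensive.
Import Order.TTheory GRing.Theory Num.Theory.
Import numFieldNormedType.Exports.
Local Open Scope classical_set_scope.
Local Open Scope ring_scope.

Definition open_cone (R : realType) (n : nat) (C : set 'rV[R]_n) : Prop :=
  [/\ C !=set0, open C,
      (forall x y (t : R), C x -> C y -> 0 <= t <= 1 -> C (t *: x + (1 - t) *: y)),
      (forall (l : R) x, 0 < l -> C x -> C (l *: x)) &
      ~ C 0].

(* M_C(y/x) := inf { l > 0 : y <=_C l x }, where y <=_C z iff z - y in closure C *)
Definition McC (R : realType) (n : nat) (C : set 'rV[R]_n) (y x : 'rV[R]_n) : R :=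
  inf [set l : R | 0 < l /\ closure C (l *: x - y)].

Definition FunkC (R : realType) (n : nat) (C : set 'rV[R]_n) (y x : 'rV[R]_n) : R :=
  ln (McC C y x).

Definition RFunkC (R : realType) (n : nat) (C : set 'rV[R]_n) (x y : 'rV[R]_n) : R :=
  FunkC C y x.

Definition HilbertC (R : realType) (n : nat) (C : set 'rV[R]_n) (x y : 'rV[R]_n) : R :=
  FunkC C x y + FunkC C y x.

Definition almost_geodesic (R : realType) (n : nat) (C : set 'rV[R]_n)
    (d : 'rV[R]_n -> 'rV[R]_n -> R) (x : nat -> 'rV[R]_n) : Prop :=
  (forall l, C (x l)) /\
  exists eps : R, 0 < eps /\
    forall l : nat, (1 <= l)%N ->
      \sum_(1 <= i < l.+1) d (x i.-1) (x i) <= d (x 0%N) (x l) + eps.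

(* Both F_C and RF_C satisfy the triangle inequality on C, the multiplicative
   gauge M_C being submultiplicative.  For any two such functions d1, d2, the
   defect sum_i d(x_{i-1}, x_i) - d(x_0, x_l) is nonnegative for each of them and
   the defect of d1 + d2 is the sum of the two defects; so it is bounded iff
   both are. *)
From mathcomp Require Import all_boot all_order all_algebra.
From mathcomp Require Import all_classical all_reals all_analysis.
From mathcomp Require Import ring lra.
Import Order.TTheory GRing.Theory Num.Theory.
Import numFieldNormedType.Exports.
Local Open Scope classical_set_scope.
Local Open Scope ring_scope.
Set Implicit Arguments. Unset Strict Implicit.

Section NormedSets.
Variables (R : realType) (V : normedModType R).

Lemma open_normP (A : set V) x : open A -> A x ->
  exists2 r : R, 0 < r & forall y, `|x - y| < r -> A y.
Proof.
rewrite openE => oA Ax; have /nbhs_ex [d Hd] := oA _ Ax.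
by exists d%:num => // y xy; apply: Hd; rewrite -ball_normE.
Qed.

Lemma closure_normP (A : set V) z :
  closure A z <-> forall e : R, 0 < e -> exists2 c, A c & `|z - c| < e.
Proof.
split=> [cz e e0 | Hz B /nbhs_ballP [e /= e0 Be]].
  have [c [Ac bc]] := cz _ (nbhsx_ballx z _ e0).
  by exists c => //; move: bc; rewrite -ball_normE.
have [c Ac zc] := Hz e e0; exists c; split => //; apply: Be.
by rewrite -ball_normE.
Qed.

End NormedSets.

Section Cone.
Variables (R : realType) (V : normedModType R) (C : set V).
Hypotheses (openC : open C)
  (convC : forall x y (t : R), C x -> C y -> 0 <= t <= 1 ->
     C (t *: x + (1 - t) *: y))
  (scaleC : forall (l : R) x, 0 < l -> C x -> C (l *: x))
  (C0 : ~ C 0).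

Lemma cone_midpoint x y : C x -> C y -> C (2^-1 *: x + 2^-1 *: y).
Proof.
move=> Cx Cy; have half : 1 - 2^-1 = 2^-1 :> R by field.
have := @convC x y 2^-1 Cx Cy; rewrite half; apply.
by rewrite invr_ge0 ler0n /= invf_le1 ?ler1n.
Qed.

Lemma coneD x y : C x -> C y -> C (x + y).
Proof.
move=> Cx Cy; have -> : x + y = 2 *: (2^-1 *: x + 2^-1 *: y).
  by rewrite scalerDr !scalerA mulfV ?pnatr_eq0 // !scale1r.
exact/scaleC/cone_midpoint.
Qed.

Lemma closure_cone_comb (a : R) u v : 0 < a -> closure C u -> closure C v ->
  closure C (a *: u + v).
Proof.
move=> a0 /closure_normP cu /closure_normP cv; apply/closure_normP => e e0.
have [u' Cu' uu'] := cu (e / (2 * a)) (divr_gt0 e0 (mulr_gt0 (ltr0Sn _ 1) a0)).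
have [v' Cv' vv'] := cv (e / 2) (divr_gt0 e0 (ltr0Sn _ 1)).
exists (a *: u' + v'); first exact/coneD/Cv'/scaleC.
have -> : a *: u + v - (a *: u' + v') = a *: (u - u') + (v - v').
  by rewrite scalerBr opprD addrACA.
apply: (le_lt_trans (ler_normD _ _)); rewrite normrZ gtr0_norm //.
have -> : e = a * (e / (2 * a)) + e / 2 by field; rewrite gt_eqF.
by rewrite ltrD // ltr_pM2l.
Qed.

Definition Mset (y x : V) := [set l : R | 0 < l /\ closure C (l *: x - y)].

Lemma Mset_mul z y x a b : Mset z y a -> Mset y x b -> Mset z x (a * b).
Proof.
move=> [a0 ca] [b0 cb]; split; first exact: mulr_gt0.
have -> : (a * b) *: x - z = a *: (b *: x - y) + (a *: y - z).
  by rewrite scalerBr scalerA addrA subrK.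
exact: closure_cone_comb.
Qed.

Lemma Mset_neq0 y x : C x -> Mset y x !=set0.
Proof.
move=> Cx; have [r r0 Hr] := open_normP openC Cx.
set L := (`|y| + r) / r.
have L0 : 0 < L by rewrite divr_gt0 // ltr_pwDr.
exists L; split => //; apply: subset_closure.
have -> : L *: x - y = L *: (x - L^-1 *: y).
  by rewrite scalerBr scalerA mulfV ?gt_eqF // scale1r.
apply: scaleC => //; apply: Hr.
rewrite opprB addrC subrK normrZ gtr0_norm ?invr_gt0 //.
rewrite /L invf_div mulrAC ltr_pdivrMr; last by rewrite ltr_pwDr.
have := normr_ge0 y; nra.
Qed.

(* If l x - y were in the closure of C for tiny l, then -d lies in C (near y)
   for some d in C, and their midpoint 0 would lie in C. *)
Lemma Mset_bounded_away y x : C y ->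
  exists2 c : R, 0 < c & forall l, Mset y x l -> c <= l.
Proof.
move=> Cy; have [r r0 Hr] := open_normP openC Cy.
set c := r / (2 * (`|x| + 1)).
have c0 : 0 < c by rewrite divr_gt0 // mulr_gt0 // ltr_pwDr.
exists c => // l [l0 /closure_normP cl]; rewrite leNgt; apply/negP => lc.
have r20 : 0 < r / 2 by rewrite divr_gt0.
have [d Cd dl] := cl _ r20.
have lx : `|l *: x| < r / 2.
  rewrite normrZ gtr0_norm //.
  apply: (le_lt_trans (y := c * `|x|)); first exact/ler_wpM2r/ltW.
  rewrite /c mulrAC ltr_pdivrMr; last by have := normr_ge0 x; nra.
  have -> : r / 2 * (2 * (`|x| + 1)) = r * (`|x| + 1) by field.
  have := normr_ge0 x; nra.
have Cmd : C (- d).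
  apply: Hr; rewrite opprK.
  have -> : y + d = (d - (l *: x - y)) + l *: x by rewrite opprB -addrA subrK addrC.
  apply: (le_lt_trans (ler_normD _ _)).
  have -> : r = r / 2 + r / 2 by field.
  by rewrite ltrD // distrC.
by apply: C0; rewrite -(subrr (2^-1 *: d)) -scalerN; apply: cone_midpoint.
Qed.

Lemma Mset_has_lbound y x : has_lbound (Mset y x).
Proof. by exists 0 => l [l0 _]; exact: ltW. Qed.

Lemma inf_Mset_gt0 y x : C x -> C y -> 0 < inf (Mset y x).
Proof.
move=> Cx Cy; have [c c0 Hc] := Mset_bounded_away x Cy.
exact: (lt_le_trans c0 (lb_le_inf (Mset_neq0 y Cx) Hc)).
Qed.

Lemma inf_Mset_submul z y x : C x -> C y -> C z ->
  inf (Mset z x) <= inf (Mset z y) * inf (Mset y x).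
Proof.
move=> Cx Cy Cz; have Mzy0 := inf_Mset_gt0 Cy Cz.
rewrite mulrC -ler_pdivrMr //; apply: lb_le_inf; first exact: Mset_neq0.
move=> b Hb; have b0 : 0 < b by case: Hb.
rewrite ler_pdivrMr // mulrC -ler_pdivrMr //.
apply: lb_le_inf; first exact: Mset_neq0.
move=> a Ha; rewrite ler_pdivrMr //.
exact: (ge_inf (Mset_has_lbound z x) (Mset_mul Ha Hb)).
Qed.

Lemma ln_inf_Mset_subadd z y x : C x -> C y -> C z ->
  ln (inf (Mset z x)) <= ln (inf (Mset z y)) + ln (inf (Mset y x)).
Proof.
move=> Cx Cy Cz.
have := inf_Mset_gt0 Cx Cz; have := inf_Mset_gt0 Cy Cz; have := inf_Mset_gt0 Cx Cy.
move=> h1 h2 h3; rewrite -lnM ?posrE // ler_ln ?posrE ?mulr_gt0 //.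
exact: inf_Mset_submul.
Qed.

End Cone.

Definition triangle_on (R : realType) (n : nat) (C : set 'rV[R]_n)
    (d : 'rV[R]_n -> 'rV[R]_n -> R) :=
  forall a b c, C a -> C b -> C c -> d a c <= d a b + d b c.

Lemma FunkC_triangle (R : realType) (n : nat) (C : set 'rV[R]_n) :
  open_cone C -> triangle_on C (FunkC C).
Proof.
by case=> _ openC convC scaleC C0 a b c Ca Cb Cc;
  exact: (ln_inf_Mset_subadd openC convC scaleC C0 Cc Cb Ca).
Qed.

Lemma RFunkC_triangle (R : realType) (n : nat) (C : set 'rV[R]_n) :
  open_cone C -> triangle_on C (RFunkC C).
Proof.
move=> hC a b c Ca Cb Cc; rewrite /RFunkC addrC.
exact: (FunkC_triangle hC Cc Cb Ca).
Qed.

Section AlmostGeodesic.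
Variables (R : realType) (n : nat) (C : set 'rV[R]_n).

Lemma triangle_on_sum_le d (x : nat -> 'rV[R]_n) : triangle_on C d ->
  (forall l, C (x l)) -> forall l, (1 <= l)%N ->
  d (x 0%N) (x l) <= \sum_(1 <= i < l.+1) d (x i.-1) (x i).
Proof.
move=> tri Cx; elim=> [//|[_ _|l IH _]]; first by rewrite big_nat1.
rewrite big_nat_recr //=.
by apply: le_trans (tri _ (x l.+1) _ (Cx _) (Cx _) (Cx _)) _; rewrite lerD2r IH.
Qed.

Lemma almost_geodesic_addP d1 d2 (x : nat -> 'rV[R]_n) :
  triangle_on C d1 -> triangle_on C d2 ->
  almost_geodesic C (fun a b => d1 a b + d2 a b) x <->
  almost_geodesic C d1 x /\ almost_geodesic C d2 x.
Proof.
move=> tri1 tri2.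
have sumD l : \sum_(1 <= i < l.+1) (d1 (x i.-1) (x i) + d2 (x i.-1) (x i)) =
    \sum_(1 <= i < l.+1) d1 (x i.-1) (x i) + \sum_(1 <= i < l.+1) d2 (x i.-1) (x i).
  exact: big_split.
split=> [[Cx [e [e0 He]]] | [[Cx [e1 [e10 H1]]] [_ [e2 [e20 H2]]]]].
  have S1 := triangle_on_sum_le tri1 Cx; have S2 := triangle_on_sum_le tri2 Cx.
  by split; split=> //; exists e; split=> // l l1;
    move: (He l l1) (S1 l l1) (S2 l l1); rewrite sumD; lra.
split=> //; exists (e1 + e2); split=> [|l l1]; first exact: addr_gt0.
by move: (H1 l l1) (H2 l l1); rewrite sumD; lra.
Qed.

End AlmostGeodesic.

Theorem mainTheorem11 (R : realType) (n : nat) (C : set 'rV[R]_n)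
  (hC : open_cone C) (x : nat -> 'rV[R]_n) :
  almost_geodesic C (HilbertC C) x <->
  (almost_geodesic C (FunkC C) x /\ almost_geodesic C (RFunkC C) x).
Proof.
exact: (almost_geodesic_addP x (FunkC_triangle hC) (RFunkC_triangle hC)).
Qed.
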